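(* If $M$ is a term of $\ell\Lambda_\infty^{4S}$, $M\to_0 N$ and $M\leadsto L$, then there is a term $P$ of $\ell\Lambda_\infty^{4S}$ such that $N\leadsto P$ and $L\to_0 P$.
   Context: Preterms: possibly infinite trees generated by $M ::= x \mid MN \mid \lambda x.M \mid \lambda^{\downarrow}x.M \mid \lambda^{\uparrow}x.M \mid \downarrow M \mid \uparrow M$ ($\downarrow M$ inductive box, $\uparrow M$ coinductive box); substitution is capture-avoiding. Patterns: $x,\downarrow x,\uparrow x,\#x,\dagger x$; environments: finite sets of patterns, each variable in at most one; $\Theta,\Xi,\Psi,\Phi$ linear environments with marked versions $\#\Theta$ etc.; $\Upsilon,\Pi$ environments with only patterns $y$, $\downarrow y$; commas are disjoint unions. A term of $\ell\Lambda_\infty^{4S}$ is a preterm $M$ with $\Gamma\vdash M$ derivable for some $\Gamma$ by: (vl) $\#\Theta,\uparrow\Xi,\dagger\Psi,x\vdash x$; (vd) $\#\Theta,\uparrow\Xi,\dagger\Psi,\#x\vdash x$; (va) $\#\Theta,\uparrow\Xi,\dagger\Psi,\dagger x\vdash x$; (a) from $\Upsilon,\#\Theta,\uparrow\Xi,\dagger\Psi\vdash M$ and $\Pi,\#\Theta,\uparrow\Xi,\dagger\Psi\vdash N$ infer $\Upsilon,\Pi,\#\Theta,\uparrow\Xi,\dagger\Psi\vdash MN$; (ll) $\Gamma,x\vdash M$ gives $\Gamma\vdash\lambda x.M$; (li)$_1$ $\Gamma,\#x\vdash M$ gives $\Gamma\vdash\lambda^\downarrow x.M$; (li)$_2$ $\Gamma,\downarrow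 x\vdash M$ gives $\Gamma\vdash\lambda^\downarrow x.M$; (lc) $\Gamma,\uparrow x\vdash M$ gives $\Gamma\vdash\lambda^\uparrow x.M$; (mi) from $\Xi,\uparrow\Psi,\dagger\Phi\vdash M$ infer $\#\Theta,\downarrow\Xi,\uparrow\Psi,\dagger\Phi\vdash\downarrow M$; (mc) from $\dagger\Xi,\dagger\Psi\vdash M$ infer $\#\Theta,\uparrow\Xi,\dagger\Psi\vdash\uparrow M$; (mc) coinductive, others inductive (every infinite branch of a derivation contains infinitely many (mc)). Basic reduction: $(\lambda x.M)N\mapsto M[N/x]$, $(\lambda^\downarrow x.M)(\downarrow N)\mapsto M[N/x]$, $(\lambda^\uparrow x.M)(\uparrow N)\mapsto M[N/x]$. $M\to N$ iff $M=C[L]$, $N=C[P]$, $L\mapsto P$ for a one-hole context $C$; $M\to_0 N$ is the special case in which the hole of $C$ lies inside no coinductive box $\uparrow(\cdot)$ (it may lie inside inductive boxes). Infinitary reduction $\Rightarrow$ and $\leadsto$ are given by the mixed formal system: (coinductive rule) if $M\to^*N$ and $N\leadsto L$ then $M\Rightarrow L$; (inductive rules) $x\leadsto x$; if $M\leadsto N$ and $L\leadsto P$ then $ML\leadsto NP$; if $M\leadsto N$ then $\lambda x.M\leadsto\lambda x.N$, $\lambda^\downarrow x.M\leadsto\lambda^\downarrow x.N$, $\lambda^\uparrow x.M\leadsto\lambda^\uparrow x.N$ and $\downarrow M\leadsto\downarrow N$; if $M\Rightarrow N$ then $\uparrow M\leadsto\uparrow N$. A judgment holds iff it is the root of a possibly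 infinite derivation tree in which every infinite branch uses the coinductive rule infinitely often. *)

(* Infinitary linear lambda calculus l-Lambda_infty^{4S}.
   Preterms are possibly infinite trees, represented coinductively with
   de Bruijn indices (alpha-equivalence classes of named trees). *)
From Stdlib Require Import Arith.

CoInductive term : Type :=
| Var  : nat -> term
| App  : term -> term -> term
| Lam  : term -> term
| LamI : term -> term          (* \^{down} x.M    *)
| LamC : term -> term          (* \^{up} x.M      *)
| BoxI : term -> term
| BoxC : term -> term.

CoInductive bisim : term -> term -> Prop :=
| b_var  n : bisim (Var n) (Var n)
| b_app  M M' N N' : bisim M M' -> bisim N N' -> bisim (App M N) (App M' N')
| b_lam  M M' : bisim M M' -> bisim (Lam M) (Lam M')
| b_lamI M M' : bisim M M' -> bisim (LamI M) (LamI M')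
| b_lamC M M' : bisim M M' -> bisim (LamC M) (LamC M')
| b_boxI M M' : bisim M M' -> bisim (BoxI M) (BoxI M')
| b_boxC M M' : bisim M M' -> bisim (BoxC M) (BoxC M').

CoFixpoint lift (c : nat) (t : term) : term :=
  match t with
  | Var n => Var (if Nat.ltb n c then n else S n)
  | App a b => App (lift c a) (lift c b)
  | Lam a => Lam (lift (S c) a)
  | LamI a => LamI (lift (S c) a)
  | LamC a => LamC (lift (S c) a)
  | BoxI a => BoxI (lift c a)
  | BoxC a => BoxC (lift c a)
  end.

(* capture-avoiding substitution of N for index k (N already lifted to depth k),
   decrementing the indices above k *)
CoFixpoint substk (k : nat) (N : term) (t : term) : term :=
  match t with
  | Var n => if Nat.eqb n k then N
             else if Nat.ltb k n then Var (pred n) else Var n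
  | App a b => App (substk k N a) (substk k N b)
  | Lam a => Lam (substk (S k) (lift 0 N) a)
  | LamI a => LamI (substk (S k) (lift 0 N) a)
  | LamC a => LamC (substk (S k) (lift 0 N) a)
  | BoxI a => BoxI (substk k N a)
  | BoxC a => BoxC (substk k N a)
  end.

(* M[N/x] where x is the variable bound by the enclosing binder of M *)
Definition subst0 (N M : term) : term := substk 0 N M.

(* pattern kinds: x, down x, up x, #x, dagger x *)
Inductive kind : Type := KLin | KInd | KCoi | KHash | KDag.

Definition env := nat -> option kind.

Definition env_finite (G : env) : Prop := exists n, forall i, n <= i -> G i = None.

(* Gamma, p : the environment for the body of a binder (index 0 is the bound variable) *)
Definition ext (k : kind) (G : env) : env :=
  fun i => match i with 0 => Some k | S j => G j end.

(* entries allowed in the "#Theta, up Xi, dagger Psi" part *)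
Definition weak (o : option kind) : Prop :=
  match o with None | Some KHash | Some KCoi | Some KDag => True | _ => False end.

(* G = #Theta, up Xi, dagger Psi, p   with p one of x, #x, dagger x at index i *)
Definition var_env (G : env) (i : nat) : Prop :=
  (G i = Some KLin \/ G i = Some KHash \/ G i = Some KDag) /\
  (forall j, j <> i -> weak (G j)).

(* G = Upsilon, Pi, #Theta, up Xi, dagger Psi with G1 = Upsilon, #Theta, up Xi, dagger Psi
   and G2 = Pi, #Theta, up Xi, dagger Psi (Upsilon, Pi only contain y and down y) *)
Definition app_split (G G1 G2 : env) : Prop :=
  forall i,
    match G i with
    | None => G1 i = None /\ G2 i = None
    | Some KLin => (G1 i = Some KLin /\ G2 i = None) \/ (G1 i = None /\ G2 i = Some KLin)
    | Some KInd => (G1 i = Some KInd /\ G2 i = None) \/ (G1 i = None /\ G2 i = Some KInd)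
    | Some k => G1 i = Some k /\ G2 i = Some k
    end.

(* rule (mi): conclusion  #Theta, down Xi, up Psi, dagger Phi;  premise  Xi, up Psi, dagger Phi *)
Definition mi_ok (G : env) : Prop := forall i, G i <> Some KLin.
Definition mi_env (G : env) : env :=
  fun i => match G i with
           | Some KInd => Some KLin
           | Some KCoi => Some KCoi
           | Some KDag => Some KDag
           | _ => None
           end.

(* rule (mc): conclusion  #Theta, up Xi, dagger Psi;  premise  dagger Xi, dagger Psi *)
Definition mc_ok (G : env) : Prop := forall i, weak (G i).
Definition mc_env (G : env) : env :=
  fun i => match G i with
           | Some KCoi => Some KDag
           | Some KDag => Some KDag
           | _ => None
           end.

(* inductive rules; R is used for the premise of the coinductive rule (mc) *)
Inductive typI (R : env -> term -> Prop) : env -> term -> Prop :=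
| t_var G i : var_env G i -> typI R G (Var i)
| t_app G G1 G2 M N : app_split G G1 G2 -> typI R G1 M -> typI R G2 N ->
    typI R G (App M N)
| t_ll G M : typI R (ext KLin G) M -> typI R G (Lam M)
| t_li1 G M : typI R (ext KHash G) M -> typI R G (LamI M)
| t_li2 G M : typI R (ext KInd G) M -> typI R G (LamI M)
| t_lc G M : typI R (ext KCoi G) M -> typI R G (LamC M)
| t_mi G M : mi_ok G -> typI R (mi_env G) M -> typI R G (BoxI M)
| t_mc G M : mc_ok G -> R (mc_env G) M -> typI R G (BoxC M).

(* mixed derivability: greatest fixed point over (mc) of the least fixed point of the rest *)
Definition typ (G : env) (M : term) : Prop :=
  exists R : env -> term -> Prop, (forall G' M', R G' M' -> typI R G' M') /\ R G M.

Definition is_term (M : term) : Prop := exists G, env_finite G /\ typ G M.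

Inductive redex : term -> term -> Prop :=
| r_lin M N : redex (App (Lam M) N) (subst0 N M)
| r_ind M N : redex (App (LamI M) (BoxI N)) (subst0 N M)
| r_coi M N : redex (App (LamC M) (BoxC N)) (subst0 N M).

(* one-hole context closure; the hole may go under a coinductive box only if deep = true *)
Inductive ctx_step (deep : bool) : term -> term -> Prop :=
| c_base M N : redex M N -> ctx_step deep M N
| c_appl M M' N : ctx_step deep M M' -> ctx_step deep (App M N) (App M' N)
| c_appr M N N' : ctx_step deep N N' -> ctx_step deep (App M N) (App M N')
| c_lam M M' : ctx_step deep M M' -> ctx_step deep (Lam M) (Lam M')
| c_lamI M M' : ctx_step deep M M' -> ctx_step deep (LamI M) (LamI M')
| c_lamC M M' : ctx_step deep M M' -> ctx_step deep (LamC M) (LamC M')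
| c_boxI M M' : ctx_step deep M M' -> ctx_step deep (BoxI M) (BoxI M')
| c_boxC M M' : deep = true -> ctx_step deep M M' -> ctx_step deep (BoxC M) (BoxC M').

(* relations on trees: closed under tree equality *)
Definition step (M N : term) : Prop :=
  exists M' N', bisim M M' /\ ctx_step true M' N' /\ bisim N' N.
Definition step0 (M N : term) : Prop :=
  exists M' N', bisim M M' /\ ctx_step false M' N' /\ bisim N' N.

Inductive star : term -> term -> Prop :=
| s_refl M N : bisim M N -> star M N
| s_step M N L : step M N -> star N L -> star M L.

(* inductive rules of infinitary reduction; R stands for => in the up-box rule *)
Inductive leadsI (R : term -> term -> Prop) : term -> term -> Prop :=
| l_var n : leadsI R (Var n) (Var n)
| l_app M N L P : leadsI R M N -> leadsI R L P -> leadsI R (App M L) (App N P)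
| l_lam M N : leadsI R M N -> leadsI R (Lam M) (Lam N)
| l_lamI M N : leadsI R M N -> leadsI R (LamI M) (LamI N)
| l_lamC M N : leadsI R M N -> leadsI R (LamC M) (LamC N)
| l_boxI M N : leadsI R M N -> leadsI R (BoxI M) (BoxI N)
| l_boxC M N : R M N -> leadsI R (BoxC M) (BoxC N).

(* M => L : coinductive rule  M ->* N, N ~> L  gives  M => L *)
Definition infred (M L : term) : Prop :=
  exists R : term -> term -> Prop,
    (forall M' L', R M' L' -> exists N, star M' N /\ leadsI R N L') /\ R M L.

Definition leads (M L : term) : Prop := leadsI infred M L.

(* A step [M ->0 N] contracts a redex outside every coinductive box. Such a position lies
   in the inductive part of any derivation of [M ~> L], so [L] has a redex at the same
   position, and contracting it gives [P]; [N ~> P] holds because [~>] is stable under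
   substitution. The argument of a coinductive redex [(λ↑x.A)(↑B)] is only related by
   [B => B'], which is enough since linearity confines [x] to coinductive boxes.
   That [P] is again a term is subject reduction, for [~>] and for [->], the latter by one
   substitution lemma for each kind of pattern. *)

From Stdlib Require Import Arith Lia FunctionalExtensionality.

Definition term_frob (t : term) : term :=
  match t with
  | Var n => Var n | App a b => App a b | Lam a => Lam a | LamI a => LamI a
  | LamC a => LamC a | BoxI a => BoxI a | BoxC a => BoxC a end.

Lemma term_frob_eq t : t = term_frob t.
Proof. destruct t; reflexivity. Qed.

Lemma lift_Var c n : lift c (Var n) = Var (if Nat.ltb n c then n else S n).
Proof. exact (term_frob_eq _). Qed.
Lemma lift_App c a b : lift c (App a b) = App (lift c a) (lift c b).
Proof. exact (term_frob_eq _). Qed.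
Lemma lift_Lam c a : lift c (Lam a) = Lam (lift (S c) a).
Proof. exact (term_frob_eq _). Qed.
Lemma lift_LamI c a : lift c (LamI a) = LamI (lift (S c) a).
Proof. exact (term_frob_eq _). Qed.
Lemma lift_LamC c a : lift c (LamC a) = LamC (lift (S c) a).
Proof. exact (term_frob_eq _). Qed.
Lemma lift_BoxI c a : lift c (BoxI a) = BoxI (lift c a).
Proof. exact (term_frob_eq _). Qed.
Lemma lift_BoxC c a : lift c (BoxC a) = BoxC (lift c a).
Proof. exact (term_frob_eq _). Qed.

Lemma substk_Var k N n : substk k N (Var n) =
  if Nat.eqb n k then N else if Nat.ltb k n then Var (pred n) else Var n.
Proof.
  rewrite (term_frob_eq (substk k N (Var n))); simpl.
  destruct (Nat.eqb n k); [destruct N | destruct (Nat.ltb k n)]; reflexivity.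
Qed.
Lemma substk_App k N a b : substk k N (App a b) = App (substk k N a) (substk k N b).
Proof. exact (term_frob_eq _). Qed.
Lemma substk_Lam k N a : substk k N (Lam a) = Lam (substk (S k) (lift 0 N) a).
Proof. exact (term_frob_eq _). Qed.
Lemma substk_LamI k N a : substk k N (LamI a) = LamI (substk (S k) (lift 0 N) a).
Proof. exact (term_frob_eq _). Qed.
Lemma substk_LamC k N a : substk k N (LamC a) = LamC (substk (S k) (lift 0 N) a).
Proof. exact (term_frob_eq _). Qed.
Lemma substk_BoxI k N a : substk k N (BoxI a) = BoxI (substk k N a).
Proof. exact (term_frob_eq _). Qed.
Lemma substk_BoxC k N a : substk k N (BoxC a) = BoxC (substk k N a).
Proof. exact (term_frob_eq _). Qed.

Ltac unfold_ops := repeat first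
  [ rewrite lift_App | rewrite lift_Lam | rewrite lift_LamI | rewrite lift_LamC
  | rewrite lift_BoxI | rewrite lift_BoxC
  | rewrite substk_App | rewrite substk_Lam | rewrite substk_LamI | rewrite substk_LamC
  | rewrite substk_BoxI | rewrite substk_BoxC ].

CoFixpoint bisim_refl t : bisim t t :=
  match t with
  | Var n => b_var n
  | App a b => b_app _ _ _ _ (bisim_refl a) (bisim_refl b)
  | Lam a => b_lam _ _ (bisim_refl a)
  | LamI a => b_lamI _ _ (bisim_refl a)
  | LamC a => b_lamC _ _ (bisim_refl a)
  | BoxI a => b_boxI _ _ (bisim_refl a)
  | BoxC a => b_boxC _ _ (bisim_refl a)
  end.

Lemma bisim_sym : forall a b, bisim a b -> bisim b a.
Proof. cofix CH. intros a b []; constructor; apply CH; assumption. Qed.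

Lemma bisim_trans : forall a b c, bisim a b -> bisim b c -> bisim a c.
Proof.
  cofix CH. intros a b c H1 H2.
  destruct H1; inversion H2; subst; constructor; eapply CH; eassumption.
Qed.

Inductive bisimF (S : term -> term -> Prop) : term -> term -> Prop :=
| bf_var n : bisimF S (Var n) (Var n)
| bf_app M M' N N' : S M M' -> S N N' -> bisimF S (App M N) (App M' N')
| bf_lam M M' : S M M' -> bisimF S (Lam M) (Lam M')
| bf_lamI M M' : S M M' -> bisimF S (LamI M) (LamI M')
| bf_lamC M M' : S M M' -> bisimF S (LamC M) (LamC M')
| bf_boxI M M' : S M M' -> bisimF S (BoxI M) (BoxI M')
| bf_boxC M M' : S M M' -> bisimF S (BoxC M) (BoxC M').

Definition bisim_upto (R : term -> term -> Prop) a b :=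
  exists a' b', bisim a a' /\ (R a' b' \/ bisim a' b') /\ bisim b' b.

Lemma bisim_upto_of (R : term -> term -> Prop) a b : R a b -> bisim_upto R a b.
Proof. intros; exists a, b; auto using bisim_refl. Qed.

Lemma bisim_upto_of_bisim (R : term -> term -> Prop) a b : bisim a b -> bisim_upto R a b.
Proof. intros; exists a, b; auto using bisim_refl. Qed.

Lemma bisim_upto_l (R : term -> term -> Prop) a a' b :
  bisim a a' -> bisim_upto R a' b -> bisim_upto R a b.
Proof. intros H (x & y & H1 & H2). exists x, y; eauto using bisim_trans. Qed.

Lemma bisim_upto_r (R : term -> term -> Prop) a b b' :
  bisim_upto R a b' -> bisim b' b -> bisim_upto R a b.
Proof. intros (x & y & H1 & H2 & H3) H. exists x, y; eauto using bisim_trans. Qed.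

Lemma bisimF_of_bisim (R : term -> term -> Prop) a b : bisim a b -> bisimF (bisim_upto R) a b.
Proof. intros []; constructor; apply bisim_upto_of_bisim; assumption. Qed.

Lemma bisim_coind_upto (R : term -> term -> Prop) :
  (forall a b, R a b -> bisimF (bisim_upto R) a b) -> forall a b, R a b -> bisim a b.
Proof.
  intros HR. enough (G : forall a b, bisim_upto R a b -> bisim a b).
  { intros a b H; apply G, bisim_upto_of, H. }
  cofix CH. intros a b (a' & b' & H1 & [H2|H2] & H3).
  - apply HR in H2. destruct H2; inversion H1; inversion H3; subst; try apply bisim_refl;
      constructor; apply CH; eapply bisim_upto_l; try eassumption;
      eapply bisim_upto_r; eassumption.
  - eauto using bisim_trans.
Qed.

(** * Lifting and substitution *)

Lemma lift_bisim c M M' : bisim M M' -> bisim (lift c M) (lift c M').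
Proof.
  intros H.
  apply (bisim_coind_upto (fun a b => exists c M M', bisim M M' /\ a = lift c M /\ b = lift c M'));
    [clear | eauto 10].
  intros a b (c & M & M' & H & -> & ->). destruct H; unfold_ops.
  1: rewrite !lift_Var; constructor.
  all: constructor; apply bisim_upto_of;
    (do 3 eexists; split; [|split; reflexivity]; eassumption).
Qed.

Lemma substk_bisim k N N' M M' :
  bisim N N' -> bisim M M' -> bisim (substk k N M) (substk k N' M').
Proof.
  intros HN HM.
  apply (bisim_coind_upto (fun a b => exists k N N' M M', bisim N N' /\ bisim M M' /\
     a = substk k N M /\ b = substk k N' M')); [clear | eauto 10].
  intros a b (k & N & N' & M & M' & HN & H & -> & ->). destruct H; unfold_ops.
  1: rewrite !substk_Var; destruct (Nat.eqb n k);
       [apply bisimF_of_bisim; auto | destruct (Nat.ltb k n); constructor].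
  all: constructor; apply bisim_upto_of;
    (do 5 eexists; split; [|split; [|split; reflexivity]]; eauto using lift_bisim).
Qed.

Ltac cmp_destr := match goal with
  | |- context [Nat.eqb ?a ?b] => destruct (Nat.eqb_spec a b)
  | |- context [Nat.ltb ?a ?b] => destruct (Nat.ltb_spec a b)
  | H : context [Nat.eqb ?a ?b] |- _ => destruct (Nat.eqb_spec a b)
  | H : context [Nat.ltb ?a ?b] |- _ => destruct (Nat.ltb_spec a b)
  end.

Ltac var_solve := apply bisimF_of_bisim;
  repeat (rewrite ?substk_Var, ?lift_Var; try cmp_destr); try (exfalso; lia);
  try apply bisim_refl;
  try (match goal with |- bisim (Var ?a) (Var ?b) =>
         replace a with b by lia; apply bisim_refl end).

Lemma lift_lift c d M : c <= d -> bisim (lift c (lift d M)) (lift (S d) (lift c M)).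
Proof.
  intros H.
  apply (bisim_coind_upto (fun a b => exists c d M, c <= d /\
     a = lift c (lift d M) /\ b = lift (S d) (lift c M))); [clear | eauto 10].
  intros a b (c & d & M & H & -> & ->). destruct M; unfold_ops.
  1: var_solve.
  all: constructor; apply bisim_upto_of;
    (do 3 eexists; split; [|split; reflexivity]; lia).
Qed.

Ltac upto_witness := apply bisim_upto_of;
  repeat match goal with |- exists _, _ => eexists end; split; [|split; reflexivity]; lia.

Ltac upto_lift_subst :=
  constructor; try upto_witness; (eapply bisim_upto_r; [upto_witness|]).

Lemma lift_substk_le c k N M : c <= k ->
  bisim (lift c (substk k N M)) (substk (S k) (lift c N) (lift c M)).
Proof.
  intros H.
  apply (bisim_coind_upto (fun a b => exists c k N M, c <= k /\
     a = lift c (substk k N M) /\ b = substk (S k) (lift c N) (lift c M))); [clear | eauto 10].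
  intros a b (c & k & N & M & H & -> & ->). destruct M; unfold_ops.
  1: var_solve.
  all: upto_lift_subst;
    (apply substk_bisim; [apply bisim_sym, lift_lift; lia | apply bisim_refl]).
Qed.

Lemma lift_substk_ge c k N M : k <= c ->
  bisim (lift c (substk k N M)) (substk k (lift c N) (lift (S c) M)).
Proof.
  intros H.
  apply (bisim_coind_upto (fun a b => exists c k N M, k <= c /\
     a = lift c (substk k N M) /\ b = substk k (lift c N) (lift (S c) M))); [clear | eauto 10].
  intros a b (c & k & N & M & H & -> & ->). destruct M; unfold_ops.
  1: var_solve.
  all: upto_lift_subst;
    (apply substk_bisim; [apply bisim_sym, lift_lift; lia | apply bisim_refl]).
Qed.

Lemma substk_lift k N M : bisim (substk k N (lift k M)) M.
Proof.
  apply (bisim_coind_upto (fun a b => exists k N M, a = substk k N (lift k M) /\ b = M));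
    [clear | eauto 10].
  intros a b (k & N & M & -> & ->). destruct M; unfold_ops.
  1: var_solve.
  all: constructor; apply bisim_upto_of; do 3 eexists; split; reflexivity.
Qed.

Lemma substk_substk j k B N M : j <= k ->
  bisim (substk k B (substk j N M)) (substk j (substk k B N) (substk (S k) (lift j B) M)).
Proof.
  intros H.
  apply (bisim_coind_upto (fun a b => exists j k B N M, j <= k /\
     a = substk k B (substk j N M) /\ b = substk j (substk k B N) (substk (S k) (lift j B) M)));
    [clear | eauto 12].
  intros a b (j & k & B & N & M & H & -> & ->). destruct M; unfold_ops.
  1: var_solve; apply bisim_sym, substk_lift.
  all: upto_lift_subst;
    (apply substk_bisim; [ apply bisim_sym, lift_substk_le; lia
                         | apply substk_bisim; [apply bisim_sym, lift_lift; lia | apply bisim_refl]]).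
Qed.

(** * Reduction *)

Ltac ctx_congr :=
  first [ eapply c_appl; eassumption | eapply c_appr; eassumption
        | eapply c_lam; eassumption | eapply c_lamI; eassumption
        | eapply c_lamC; eassumption | eapply c_boxI; eassumption
        | eapply c_boxC; eassumption ].

Lemma ctx_step_lift d X D : ctx_step d X D -> forall c,
  exists Y, ctx_step d (lift c X) Y /\ bisim Y (lift c D).
Proof.
  induction 1; intro c; unfold_ops.
  1: destruct H; unfold_ops; (eexists; split; [apply c_base; constructor|]);
       apply bisim_sym, lift_substk_ge; lia.
  all: destruct (IHctx_step c) as (Y1 & H1 & H2);
       destruct (IHctx_step (S c)) as (Y2 & H3 & H4).
  all: eexists; split; [ctx_congr|]; constructor; eauto using bisim_refl.
Qed.

Lemma ctx_step_substk d X D : ctx_step d X D -> forall k B,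
  exists Y, ctx_step d (substk k B X) Y /\ bisim Y (substk k B D).
Proof.
  induction 1; intros k B; unfold_ops.
  1: destruct H; unfold_ops; (eexists; split; [apply c_base; constructor|]);
       apply bisim_sym, substk_substk; lia.
  all: destruct (IHctx_step k B) as (Y1 & H1 & H2);
       destruct (IHctx_step (S k) (lift 0 B)) as (Y2 & H3 & H4).
  all: eexists; split; [ctx_congr|]; constructor; eauto using bisim_refl.
Qed.

Lemma step_bisim_l a a' b : bisim a a' -> step a' b -> step a b.
Proof. intros H (x & y & H1 & H2). exists x, y; split; eauto using bisim_trans. Qed.

Lemma step_lift c X D : step X D -> step (lift c X) (lift c D).
Proof.
  intros (X' & D' & H1 & H2 & H3). destruct (ctx_step_lift _ _ _ H2 c) as (Y & H4 & H5).
  exists (lift c X'), Y; repeat split; eauto using lift_bisim, bisim_trans.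
Qed.

Lemma step_substk k B X D : step X D -> step (substk k B X) (substk k B D).
Proof.
  intros (X' & D' & H1 & H2 & H3). destruct (ctx_step_substk _ _ _ H2 k B) as (Y & H4 & H5).
  exists (substk k B X'), Y; repeat split; eauto using substk_bisim, bisim_refl, bisim_trans.
Qed.

Lemma star_trans a b c : star a b -> star b c -> star a c.
Proof.
  intro H; revert c; induction H; intros c Hc.
  - inversion Hc; subst.
    + apply s_refl; eauto using bisim_trans.
    + eapply s_step; eauto using step_bisim_l.
  - eapply s_step; eauto.
Qed.

Lemma star_lift c a b : star a b -> star (lift c a) (lift c b).
Proof. induction 1; [apply s_refl, lift_bisim | eapply s_step; eauto using step_lift]; auto. Qed.

Lemma star_substk k B a b : star a b -> star (substk k B a) (substk k B b).
Proof.
  induction 1; [apply s_refl, substk_bisim | eapply s_step; eauto using step_substk];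
    auto using bisim_refl.
Qed.

Lemma star_congr (f : term -> term)
  (Hb : forall a b, bisim a b -> bisim (f a) (f b))
  (Hc : forall a b, ctx_step true a b -> ctx_step true (f a) (f b)) :
  forall a b, star a b -> star (f a) (f b).
Proof.
  induction 1; [apply s_refl; auto|].
  destruct H as (x & y & H1 & H2 & H3).
  eapply s_step; [exists (f x), (f y) | exact IHstar]; auto.
Qed.

Lemma star_app a b c d : star a b -> star c d -> star (App a c) (App b d).
Proof.
  intros; eapply star_trans.
  - apply (star_congr (fun x => App x c)); eauto;
      intros; [constructor; auto using bisim_refl | apply c_appl; auto].
  - apply (star_congr (fun x => App b x)); eauto;
      intros; [constructor; auto using bisim_refl | apply c_appr; auto].
Qed.

Lemma star_lam a b : star a b -> star (Lam a) (Lam b).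
Proof. apply star_congr; intros; [constructor | apply c_lam]; auto. Qed.
Lemma star_lamI a b : star a b -> star (LamI a) (LamI b).
Proof. apply star_congr; intros; [constructor | apply c_lamI]; auto. Qed.
Lemma star_lamC a b : star a b -> star (LamC a) (LamC b).
Proof. apply star_congr; intros; [constructor | apply c_lamC]; auto. Qed.
Lemma star_boxI a b : star a b -> star (BoxI a) (BoxI b).
Proof. apply star_congr; intros; [constructor | apply c_boxI]; auto. Qed.

(** * Infinitary reduction *)

Lemma leadsI_mono (R S : term -> term -> Prop) : (forall a b, R a b -> S a b) ->
  forall a b, leadsI R a b -> leadsI S a b.
Proof. intros HRS; induction 1; constructor; auto. Qed.

Lemma infred_unfold a b : infred a b -> exists D, star a D /\ leadsI infred D b.
Proof.
  intros (R & HR & Hab). destruct (HR _ _ Hab) as (D & H1 & H2). exists D; split; auto.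
  eapply leadsI_mono; [|eauto]. intros x y Hxy. exists R; auto.
Qed.

Lemma infred_fold a b D : star a D -> leadsI infred D b -> infred a b.
Proof.
  intros H1 H2. exists (fun x y => infred x y \/ (x = a /\ y = b)). split; auto.
  intros x y [Hxy | [-> ->]].
  - destruct (infred_unfold _ _ Hxy) as (E & H3 & H4).
    exists E; split; auto. eapply leadsI_mono; [|eauto]; auto.
  - exists D; split; auto. eapply leadsI_mono; [|eauto]; auto.
Qed.

Lemma infred_of_leads a b : leads a b -> infred a b.
Proof. intros; apply (infred_fold _ _ a); auto using s_refl, bisim_refl. Qed.

Lemma leadsI_lift (R S : term -> term -> Prop)
  (HRS : forall c X Y, R X Y -> S (lift c X) (lift c Y)) :
  forall D Y, leadsI R D Y -> forall c, leadsI S (lift c D) (lift c Y).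
Proof. induction 1; intro c; unfold_ops; try rewrite !lift_Var; constructor; auto. Qed.

Lemma infred_lift c X Y : infred X Y -> infred (lift c X) (lift c Y).
Proof.
  intro H. exists (fun a b => exists c X Y, infred X Y /\ a = lift c X /\ b = lift c Y).
  split; [clear | eauto 10].
  intros a b (c & X & Y & H & -> & ->).
  destruct (infred_unfold _ _ H) as (D & H1 & H2). exists (lift c D); split.
  - apply star_lift; auto.
  - eapply leadsI_lift; [|eauto]. intros; eauto 10.
Qed.

Lemma leads_lift c X Y : leads X Y -> leads (lift c X) (lift c Y).
Proof. intro H; eapply leadsI_lift; [|eauto]. apply infred_lift. Qed.

(* [infred_substk] holds by coinduction up to this closure: [leads_substk_star] walks through
   the inductive layer of [D ~> Y], and at a coinductive box the pair re-enters the relation. *)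
Definition infred_substk_rel (a b : term) : Prop :=
  infred a b \/ exists k B B' X Y, infred X Y /\ infred B B' /\
     a = substk k B X /\ b = substk k B' Y.

Lemma leads_substk_star D Y k B B' : leads D Y -> infred B B' ->
  exists E, star (substk k B D) E /\ leadsI infred_substk_rel E (substk k B' Y).
Proof.
  intros H; revert k B B'; induction H; intros k B B' HB; unfold_ops.
  - rewrite !substk_Var. destruct (Nat.eqb n k).
    + destruct (infred_unfold _ _ HB) as (E & H1 & H2). exists E; split; auto.
      eapply leadsI_mono; [|eauto]. unfold infred_substk_rel; auto.
    + eexists; split; [apply s_refl, bisim_refl|]. destruct (Nat.ltb k n); constructor.
  - destruct (IHleadsI1 k B B' HB) as (E1 & H1 & H2).
    destruct (IHleadsI2 k B B' HB) as (E2 & H3 & H4).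
    exists (App E1 E2); split; [apply star_app | constructor]; auto.
  - destruct (IHleadsI (S k) (lift 0 B) (lift 0 B')) as (E & H1 & H2); [apply infred_lift; auto|].
    exists (Lam E); split; [apply star_lam | constructor]; auto.
  - destruct (IHleadsI (S k) (lift 0 B) (lift 0 B')) as (E & H1 & H2); [apply infred_lift; auto|].
    exists (LamI E); split; [apply star_lamI | constructor]; auto.
  - destruct (IHleadsI (S k) (lift 0 B) (lift 0 B')) as (E & H1 & H2); [apply infred_lift; auto|].
    exists (LamC E); split; [apply star_lamC | constructor]; auto.
  - destruct (IHleadsI k B B' HB) as (E & H1 & H2).
    exists (BoxI E); split; [apply star_boxI | constructor]; auto.
  - exists (BoxC (substk k B M)); split; [apply s_refl, bisim_refl|].
    constructor. right. exists k, B, B', M, N; auto.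
Qed.

Lemma infred_substk k B B' X Y : infred X Y -> infred B B' ->
  infred (substk k B X) (substk k B' Y).
Proof.
  intros H HB. exists infred_substk_rel. split; [|right; exists k, B, B', X, Y; auto].
  intros a b [Hab | (k' & C & C' & X' & Y' & H1 & H2 & -> & ->)].
  - destruct (infred_unfold _ _ Hab) as (E & H3 & H4). exists E; split; auto.
    eapply leadsI_mono; [|eauto]. unfold infred_substk_rel; auto.
  - destruct (infred_unfold _ _ H1) as (D & H3 & H4).
    destruct (leads_substk_star _ _ k' C C' H4 H2) as (E & H5 & H6).
    exists E; split; auto. eapply star_trans; [apply star_substk; eauto | auto].
Qed.

Inductive occurs_shallow : nat -> term -> Prop :=
| os_var k : occurs_shallow k (Var k)
| os_appl k M N : occurs_shallow k M -> occurs_shallow k (App M N)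
| os_appr k M N : occurs_shallow k N -> occurs_shallow k (App M N)
| os_lam k M : occurs_shallow (S k) M -> occurs_shallow k (Lam M)
| os_lamI k M : occurs_shallow (S k) M -> occurs_shallow k (LamI M)
| os_lamC k M : occurs_shallow (S k) M -> occurs_shallow k (LamC M)
| os_boxI k M : occurs_shallow k M -> occurs_shallow k (BoxI M).

Lemma leads_substk A A' k B B' : leads A A' -> infred B B' ->
  (occurs_shallow k A -> leads B B') -> leads (substk k B A) (substk k B' A').
Proof.
  intros H; revert k B B'; induction H; intros k B B' HB Hocc; unfold_ops.
  - rewrite !substk_Var. destruct (Nat.eqb_spec n k).
    + subst; apply Hocc; constructor.
    + destruct (Nat.ltb k n); constructor.
  - constructor; [apply IHleadsI1 | apply IHleadsI2]; auto; intro; apply Hocc;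
      [apply os_appl | apply os_appr]; auto.
  - constructor; apply IHleadsI; [apply infred_lift; auto|].
    intro; apply leads_lift, Hocc; constructor; auto.
  - constructor; apply IHleadsI; [apply infred_lift; auto|].
    intro; apply leads_lift, Hocc; constructor; auto.
  - constructor; apply IHleadsI; [apply infred_lift; auto|].
    intro; apply leads_lift, Hocc; constructor; auto.
  - constructor; apply IHleadsI; auto. intro; apply Hocc; constructor; auto.
  - constructor; apply infred_substk; auto.
Qed.

Lemma infred_bisim_l a a' b : bisim a a' -> infred a b -> infred a' b.
Proof.
  intros H1 H2. destruct (infred_unfold _ _ H2) as (D & H3 & H4).
  apply (infred_fold _ _ D); auto. eapply star_trans; [apply s_refl, bisim_sym; eauto | auto].
Qed.

Lemma leads_bisim_l a a' b : bisim a a' -> leads a b -> leads a' b.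
Proof.
  unfold leads; intros Hb H; revert a' Hb; induction H; intros a' Hb; inversion Hb; subst;
    constructor; eauto using infred_bisim_l.
Qed.

(** * Typing: weakening and lifting *)

Definition env_cons (o : option kind) (G : env) : env :=
  fun i => match i with 0 => o | S j => G j end.

Definition env_remove (k : nat) (E : env) : env :=
  fun i => if Nat.ltb i k then E i else E (S i).

Definition env_insert (c : nat) (o : option kind) (F : env) : env :=
  fun i => if Nat.ltb i c then F i else if Nat.eqb i c then o else F (pred i).

Ltac destr_env :=
  match goal with
  | |- context [ Nat.ltb ?a ?b ] => destruct (Nat.ltb a b)
  | |- context [ Nat.eqb ?a ?b ] => destruct (Nat.eqb a b)
  | H : context [ Nat.ltb ?a ?b ] |- _ => destruct (Nat.ltb a b)
  | H : context [ Nat.eqb ?a ?b ] |- _ => destruct (Nat.eqb a b)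
  | o : option kind |- _ => destruct o as [[]|]
  | |- context [ ?f ?x ] =>
      lazymatch type of (f x) with option kind =>
        let t := constr:(f x) in
        lazymatch t with Some _ => fail | None => fail | _ => destruct t as [[]|] end end
  | H : context [ ?f ?x ] |- _ =>
      lazymatch type of (f x) with option kind =>
        let t := constr:(f x) in
        lazymatch t with Some _ => fail | None => fail | _ => destruct t as [[]|] end end
  end.

Ltac envsolve :=
  unfold env_cons, env_remove, env_insert, ext, mi_env, mc_env, weak in *;
  repeat (destr_env; simpl in *; try discriminate;
    repeat match goal with
    | H : _ /\ _ |- _ => destruct H
    | H : _ \/ _ |- _ => destruct H
    | H : Some _ = None |- _ => discriminate H
    | H : None = Some _ |- _ => discriminate H
    | H : Some ?a = Some ?b |- _ => (discriminate H || (injection H; clear H; intros))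
    end);
  intuition (try reflexivity; try discriminate; try congruence).

Lemma typI_mono (R S : env -> term -> Prop) : (forall G M, R G M -> S G M) ->
  forall G M, typI R G M -> typI S G M.
Proof.
  intros HRS; induction 1; [eapply t_var | eapply t_app | eapply t_ll | eapply t_li1
  | eapply t_li2 | eapply t_lc | eapply t_mi | eapply t_mc]; eauto.
Qed.

Lemma typ_unfold G M : typ G M -> typI typ G M.
Proof.
  intros (R & HR & H). eapply typI_mono; [|apply HR; eauto]. intros; exists R; auto.
Qed.

Lemma typ_coind (R : env -> term -> Prop) :
  (forall G M, R G M -> typI (fun G M => R G M \/ typ G M) G M) ->
  forall G M, R G M -> typ G M.
Proof.
  intros HR G M H. exists (fun G M => R G M \/ typ G M). split; auto.
  intros G' M' [H1|H1]; auto. eapply typI_mono; [|apply typ_unfold; eauto]. auto.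
Qed.

Lemma typ_fold G M : typI typ G M -> typ G M.
Proof.
  intro H. apply (typ_coind (fun G' M' => G' = G /\ M' = M)); [|auto].
  intros G' M' [-> ->]. eapply typI_mono; [|eauto]. auto.
Qed.

Lemma typ_bisim G M M' : typ G M -> bisim M M' -> typ G M'.
Proof.
  intros H1 H2. apply (typ_coind (fun G M' => exists M, typ G M /\ bisim M M')); [clear|eauto].
  intros G M' (M & H1 & H2). apply typ_unfold in H1. revert M' H2.
  induction H1; intros M' HB; inversion HB; subst; [eapply t_var | eapply t_app | eapply t_ll
  | eapply t_li1 | eapply t_li2 | eapply t_lc | eapply t_mi | eapply t_mc]; eauto.
Qed.

Definition env_weakening (F G : env) := forall i, F i = G i \/ (F i = None /\ weak (G i)).

Lemma typ_weaken F G N : typ F N -> env_weakening F G -> typ G N.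
Proof.
  intros H1 H2. apply (typ_coind (fun G N => exists F, typ F N /\ env_weakening F G));
    [clear | eauto].
  intros G N (F & H1 & H2). apply typ_unfold in H1. revert G H2.
  induction H1; intros G' HW.
  - constructor. destruct H as [H H']. split.
    + destruct (HW i) as [E|[E _]]; [rewrite <- E; auto|]. rewrite E in H; intuition discriminate.
    + intros j Hj. specialize (H' j Hj). destruct (HW j) as [E|[E W]]; [rewrite <- E|]; auto.
  - apply (t_app _ _ (fun i => match G i with None => G' i | _ => G1 i end)
                     (fun i => match G i with None => G' i | _ => G2 i end)).
    + intro i. specialize (H i). specialize (HW i). envsolve.
    + apply IHtypI1. intro i. specialize (H i). specialize (HW i). envsolve.
    + apply IHtypI2. intro i. specialize (H i). specialize (HW i). envsolve.
  - constructor. apply IHtypI. intros [|i]; simpl; auto.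
  - apply t_li1. apply IHtypI. intros [|i]; simpl; auto.
  - apply t_li2. apply IHtypI. intros [|i]; simpl; auto.
  - constructor. apply IHtypI. intros [|i]; simpl; auto.
  - constructor.
    + intro i. specialize (H i). specialize (HW i). envsolve.
    + apply IHtypI. intro i. specialize (H i). specialize (HW i). envsolve.
  - constructor.
    + intro i. specialize (H i). specialize (HW i). envsolve.
    + left. exists (mc_env G). split; auto. intro i. specialize (H i). specialize (HW i). envsolve.
Qed.

Lemma ext_insert k c o F : ext k (env_insert c o F) = env_insert (S c) o (ext k F).
Proof.
  extensionality i. unfold ext, env_insert. destruct i as [|i]; simpl; auto.
  destruct (Nat.ltb_spec i c), (Nat.ltb_spec (S i) (S c)); try lia; auto.
  destruct (Nat.eqb_spec i c), (Nat.eqb_spec (S i) (S c)); try lia; auto.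
  destruct i; [lia | reflexivity].
Qed.

Lemma var_env_insert F i c : var_env F i ->
  var_env (env_insert c None F) (if Nat.ltb i c then i else S i).
Proof.
  intros [H1 H2]. unfold env_insert. split.
  - destruct (Nat.ltb_spec i c).
    + destruct (Nat.ltb_spec i c); [auto | lia].
    + destruct (Nat.ltb_spec (S i) c); [lia|]. destruct (Nat.eqb_spec (S i) c); [lia | auto].
  - intros j Hj. destruct (Nat.ltb_spec j c).
    + apply H2. destruct (Nat.ltb_spec i c); lia.
    + destruct (Nat.eqb_spec j c); [exact I|]. apply H2. destruct (Nat.ltb_spec i c); lia.
Qed.

Lemma typ_lift F N c : typ F N -> typ (env_insert c None F) (lift c N).
Proof.
  intros H.
  apply (typ_coind (fun G M => exists c F N, typ F N /\ G = env_insert c None F /\ M = lift c N));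
    [clear | eauto 10].
  intros G M (c & F & N & H & -> & ->). apply typ_unfold in H. revert c.
  induction H; intro c; unfold_ops.
  - rewrite lift_Var. constructor. apply var_env_insert; auto.
  - apply (t_app _ _ (env_insert c None G1) (env_insert c None G2)); auto.
    intro i. unfold env_insert. destruct (i <? c); [apply H|].
    destruct (i =? c); [simpl; auto | apply H].
  - constructor. rewrite ext_insert. auto.
  - apply t_li1. rewrite ext_insert. auto.
  - apply t_li2. rewrite ext_insert. auto.
  - constructor. rewrite ext_insert. auto.
  - constructor.
    + intro i. unfold env_insert. destruct (i <? c); [apply H|].
      destruct (i =? c); [discriminate | apply H].
    + replace (mi_env (env_insert c None G)) with (env_insert c None (mi_env G)); auto.
      extensionality i. unfold env_insert, mi_env. destruct (i <? c), (i =? c); auto.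
  - constructor.
    + intro i. unfold env_insert. destruct (i <? c); [apply H|].
      destruct (i =? c); [exact I | apply H].
    + left. exists c, (mc_env G), M. repeat split; auto.
      extensionality i. unfold env_insert, mc_env. destruct (i <? c), (i =? c); auto.
Qed.

Lemma typ_lift0 F N o : typ F N -> weak o -> typ (env_cons o F) (lift 0 N).
Proof.
  intros H W. eapply typ_weaken; [apply typ_lift; eauto|].
  intros [|i]; unfold env_insert, env_cons; simpl; auto.
Qed.

Definition env_hash_weakening (F G : env) := forall i, F i = G i
  \/ (F i = Some KLin /\ G i = Some KHash) \/ (F i = None /\ G i = Some KHash).

Lemma typI_hash_weaken F G N : typI typ F N -> env_hash_weakening F G -> typI typ G N.
Proof.
  intro H. revert G. induction H; intros G' HC.
  - constructor. destruct H as [H H']. split.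
    + destruct (HC i) as [E|[[E1 E2]|[E1 E2]]]; [rewrite <- E; auto | auto |].
      rewrite E1 in H; intuition discriminate.
    + intros j Hj. specialize (H' j Hj).
      destruct (HC j) as [E|[[E1 E2]|[E1 E2]]];
        [rewrite <- E; auto | rewrite E1 in H'; contradiction | rewrite E2; exact I].
  - pose (hash_of G0 := fun i => match G' i, G i with
                         | Some KHash, Some KLin | Some KHash, None => Some KHash
                         | _, _ => G0 i end).
    apply (t_app _ _ (hash_of G1) (hash_of G2)); [|apply IHtypI1|apply IHtypI2];
      intro i; specialize (H i); specialize (HC i); subst hash_of; envsolve.
  - constructor. apply IHtypI. intros [|i]; simpl; auto.
  - apply t_li1. apply IHtypI. intros [|i]; simpl; auto.
  - apply t_li2. apply IHtypI. intros [|i]; simpl; auto.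
  - constructor. apply IHtypI. intros [|i]; simpl; auto.
  - constructor.
    + intro i. specialize (H i). specialize (HC i). envsolve.
    + replace (mi_env G') with (mi_env G); auto. extensionality i.
      specialize (H i). specialize (HC i). envsolve.
  - constructor.
    + intro i. specialize (H i). specialize (HC i). envsolve.
    + replace (mc_env G') with (mc_env G); auto. extensionality i.
      specialize (H i). specialize (HC i). envsolve.
Qed.

(** * Typing: substitution *)

Lemma app_split_sym G G1 G2 : app_split G G1 G2 -> app_split G G2 G1.
Proof. intros H i. specialize (H i). destruct (G i) as [[]|]; tauto. Qed.

Lemma env_remove_at E k j : env_remove k E j = E (if Nat.ltb j k then j else S j).
Proof. unfold env_remove. destruct (j <? k); reflexivity. Qed.

Lemma app_split_remove k G G1 G2 :
  app_split G G1 G2 -> app_split (env_remove k G) (env_remove k G1) (env_remove k G2).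
Proof. intros H i. unfold env_remove. destruct (i <? k); apply H. Qed.

Lemma ext_remove kd c E : ext kd (env_remove c E) = env_remove (S c) (ext kd E).
Proof.
  extensionality i. destruct i; reflexivity.
Qed.

Lemma mi_env_remove k E : mi_env (env_remove k E) = env_remove k (mi_env E).
Proof. extensionality i. unfold env_remove, mi_env. destruct (i <? k); auto. Qed.

Lemma mc_env_remove k E : mc_env (env_remove k E) = env_remove k (mc_env E).
Proof. extensionality i. unfold env_remove, mc_env. destruct (i <? k); auto. Qed.

Lemma mi_ok_remove k E : mi_ok E -> mi_ok (env_remove k E).
Proof. intros H i. rewrite env_remove_at. apply H. Qed.

Lemma mc_ok_remove k E : mc_ok E -> mc_ok (env_remove k E).
Proof. intros H i. rewrite env_remove_at. apply H. Qed.

Lemma var_env_remove E i k : var_env E i -> i <> k -> weak (E k) ->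
  var_env (env_remove k E) (if Nat.ltb k i then pred i else i).
Proof.
  intros [H1 H2] Hik W. unfold env_remove. split.
  - destruct (Nat.ltb_spec k i).
    + destruct (Nat.ltb_spec (pred i) k); [lia|]. replace (S (pred i)) with i by lia. auto.
    + destruct (Nat.ltb_spec i k); [auto | lia].
  - intros j Hj. destruct (Nat.ltb_spec j k); apply H2; destruct (Nat.ltb_spec k i); lia.
Qed.

Lemma var_env_remove_self E k : var_env E k -> forall j, weak (env_remove k E j).
Proof.
  intros [_ H] j. rewrite env_remove_at. apply H. destruct (Nat.ltb_spec j k); lia.
Qed.

Definition dag_sub (F G : env) := forall i, F i = None \/ (F i = Some KDag /\ G i = Some KDag).

(* Substituting [N : F] for index [k] of [E] needs no resources: [k] is unused, or a
   [†]-entry and [N] only uses [†]-entries available in the rest of [E]. *)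
Definition dag_subst_ok (F : env) (N : term) (k : nat) (E : env) : Prop :=
  E k = None \/ (E k = Some KDag /\ typ F N /\ dag_sub F (env_remove k E)).

Lemma dag_subst_ok_split F N k E E1 E2 :
  app_split E E1 E2 -> dag_subst_ok F N k E -> dag_subst_ok F N k E1.
Proof.
  intros HS [Hk | (Hk & HN & HD)]; pose proof (HS k) as HSk; rewrite Hk in HSk; [left; tauto|].
  right; repeat split; try tauto.
  intro j. destruct (HD j) as [E'|[E1' E2']]; auto. right; split; auto.
  pose proof (app_split_remove k _ _ _ HS j) as Hj. rewrite E2' in Hj; tauto.
Qed.

Lemma dag_subst_ok_ext F N k E kd :
  dag_subst_ok F N k E -> dag_subst_ok (env_cons None F) (lift 0 N) (S k) (ext kd E).
Proof.
  intros [Hk | (Hk & HN & HD)]; [left; auto | right; split; [auto | split]].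
  - apply typ_lift0; [auto | exact I].
  - intros [|j]; simpl; auto.
Qed.

Lemma dag_subst_ok_mi F N k E : dag_subst_ok F N k E -> dag_subst_ok F N k (mi_env E).
Proof.
  intros [Hk | (Hk & HN & HD)]; [left | right; split; [|split; [exact HN|]]];
    try (unfold mi_env; rewrite Hk; reflexivity).
  intro j. destruct (HD j) as [E'|[E1 E2]]; auto. right; split; auto.
  rewrite <- mi_env_remove. unfold mi_env. rewrite E2. reflexivity.
Qed.

Lemma dag_subst_ok_mc F N k E : dag_subst_ok F N k E -> dag_subst_ok F N k (mc_env E).
Proof.
  intros [Hk | (Hk & HN & HD)]; [left | right; split; [|split; [exact HN|]]];
    try (unfold mc_env; rewrite Hk; reflexivity).
  intro j. destruct (HD j) as [E'|[E1 E2]]; auto. right; split; auto.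
  rewrite <- mc_env_remove. unfold mc_env. rewrite E2. reflexivity.
Qed.

Lemma typ_substk_var_dag F N k E i :
  var_env E i -> dag_subst_ok F N k E -> typ (env_remove k E) (substk k N (Var i)).
Proof.
  intros HV HC. rewrite substk_Var. destruct (Nat.eqb_spec i k).
  - subst. destruct HC as [HC | (HC & HN & HD)].
    + destruct HV as [[H|[H|H]] _]; congruence.
    + eapply typ_weaken; [apply HN|].
      intro j. destruct (HD j) as [E'|[E1 E2]]; [|left; congruence].
      right; split; auto. apply var_env_remove_self; auto.
  - assert (W : weak (E k)) by (destruct HC as [HC|[HC _]]; rewrite HC; exact I).
    pose proof (var_env_remove E i k HV n W) as HR.
    apply typ_fold. destruct (Nat.ltb k i); constructor; exact HR.
Qed.

Lemma typ_substk_dag F N k E A : typ E A -> dag_subst_ok F N k E ->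
  typ (env_remove k E) (substk k N A).
Proof.
  intros H1 H2.
  apply (typ_coind (fun G M => exists F N k E A, typ E A /\ dag_subst_ok F N k E /\
     G = env_remove k E /\ M = substk k N A)); [clear | eauto 10].
  intros G M (F & N & k & E & A & H & HC & -> & ->).
  apply typ_unfold in H. revert F N k HC. induction H; intros Fs Ns ks HC; unfold_ops.
  - eapply typI_mono; [|exact (typ_unfold _ _ (typ_substk_var_dag Fs Ns ks G i H HC))]. auto.
  - apply (t_app _ _ (env_remove ks G1) (env_remove ks G2)); [apply app_split_remove; auto| |].
    + apply (IHtypI1 Fs Ns ks), (dag_subst_ok_split _ _ _ _ _ _ H HC).
    + apply (IHtypI2 Fs Ns ks), (dag_subst_ok_split _ _ _ _ _ _ (app_split_sym _ _ _ H) HC).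
  - constructor. rewrite ext_remove. eapply IHtypI, dag_subst_ok_ext, HC.
  - apply t_li1. rewrite ext_remove. eapply IHtypI, dag_subst_ok_ext, HC.
  - apply t_li2. rewrite ext_remove. eapply IHtypI, dag_subst_ok_ext, HC.
  - constructor. rewrite ext_remove. eapply IHtypI, dag_subst_ok_ext, HC.
  - constructor; [apply mi_ok_remove; auto|].
    rewrite mi_env_remove. apply (IHtypI Fs Ns ks), dag_subst_ok_mi, HC.
  - constructor; [apply mc_ok_remove; auto|].
    left. exists Fs, Ns, ks, (mc_env G), M. repeat split; auto using dag_subst_ok_mc, mc_env_remove.
Qed.

Lemma typ_substk_unused E A k N : typ E A -> E k = None -> typ (env_remove k E) (substk k N A).
Proof. intros H1 H2. apply (typ_substk_dag E); [auto | left; auto]. Qed.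

Definition shared_entry (kd : kind) : option kind :=
  match kd with KLin | KInd => None | _ => Some kd end.

Lemma shared_entry_weak kd : weak (shared_entry kd).
Proof. destruct kd; exact I. Qed.

(* A binder of kind [kd] over the receiving term leaves the substituted term's side with
   [shared_entry kd]: nothing for linear patterns, a shared copy otherwise. *)
Lemma app_split_ext kd G R F :
  app_split G R F -> app_split (ext kd G) (ext kd R) (env_cons (shared_entry kd) F).
Proof. intros H [|i]; simpl; [destruct kd; simpl; auto | apply H]. Qed.

Lemma mi_ok_cons F kd : mi_ok F -> mi_ok (env_cons (shared_entry kd) F).
Proof. intros H [|i]; simpl; [destruct kd; discriminate | apply H]. Qed.

Lemma mc_ok_cons F kd : mc_ok F -> mc_ok (env_cons (shared_entry kd) F).
Proof. intros H [|i]; simpl; [apply shared_entry_weak | apply H]. Qed.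

Lemma typ_lift0_mi F N kd :
  typ (mi_env F) N -> typ (mi_env (env_cons (shared_entry kd) F)) (lift 0 N).
Proof.
  intro H. replace (mi_env (env_cons (shared_entry kd) F))
    with (env_cons (mi_env (env_cons (shared_entry kd) F) 0) (mi_env F)).
  - apply typ_lift0; auto. destruct kd; exact I.
  - extensionality i. destruct i; reflexivity.
Qed.

Lemma typ_lift0_mc F N kd :
  typ (mc_env F) N -> typ (mc_env (env_cons (shared_entry kd) F)) (lift 0 N).
Proof.
  intro H. replace (mc_env (env_cons (shared_entry kd) F))
    with (env_cons (mc_env (env_cons (shared_entry kd) F) 0) (mc_env F)).
  - apply typ_lift0; auto. destruct kd; exact I.
  - extensionality i. destruct i; reflexivity.
Qed.

Definition env_without (G H : env) : env :=
  fun j => match G j with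
           | Some KLin | Some KInd => match H j with Some _ => None | None => G j end
           | o => o
           end.

Definition ind_to_hash (F G : env) : env :=
  fun i => match F i with Some KInd => Some KHash | _ => G i end.

Lemma app_split_assoc E E1 E2 G F : app_split E E1 E2 -> app_split G E F ->
  app_split G (env_without G E2) E2 /\ app_split (env_without G E2) E1 F.
Proof.
  intros H1 H2; split; intro j; specialize (H1 j); specialize (H2 j);
    unfold env_without; envsolve.
Qed.

Lemma app_split_share E E1 E2 G F : mi_ok F -> app_split E E1 E2 -> app_split G E F ->
  app_split (ind_to_hash F G) (ind_to_hash F (env_without G E2)) (ind_to_hash F (env_without G E1))
  /\ app_split (env_without G E2) E1 F /\ app_split (env_without G E1) E2 F.
Proof.
  intros HF H1 H2; split; [|split]; intro j; specialize (HF j); specialize (H1 j);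
    specialize (H2 j); unfold env_without, ind_to_hash; envsolve.
Qed.

Lemma app_split_weak_l G E F : (forall j, weak (E j)) -> app_split G E F -> G = F.
Proof.
  intros HE HS. extensionality j. specialize (HE j). specialize (HS j). envsolve.
Qed.

Lemma app_split_mi G E F : mi_ok E -> mi_ok F -> app_split G E F ->
  mi_ok G /\ app_split (mi_env G) (mi_env E) (mi_env F).
Proof.
  intros HE HF HS; split; intro j; specialize (HE j); specialize (HF j); specialize (HS j);
    envsolve.
Qed.

Lemma ind_to_hash_ext F G kd :
  ind_to_hash (env_cons (shared_entry kd) F) (ext kd G) = ext kd (ind_to_hash F G).
Proof. extensionality i. destruct i; [destruct kd|]; reflexivity. Qed.

Lemma ind_to_hash_mi G E F : mi_ok E -> mi_ok F -> app_split G E F ->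
  mi_ok (ind_to_hash F G) /\ mi_env (ind_to_hash F G) = mi_env E.
Proof.
  intros HE HF HS; split; [intro j | extensionality j]; specialize (HE j); specialize (HF j);
    specialize (HS j); unfold ind_to_hash; envsolve.
Qed.

Lemma ind_to_hash_mc G E F : mc_ok E -> mi_ok F -> app_split G E F ->
  mc_ok (ind_to_hash F G) /\ mc_env (ind_to_hash F G) = mc_env E.
Proof.
  intros HE HF HS; split; [intro j | extensionality j]; specialize (HE j); specialize (HF j);
    specialize (HS j); unfold ind_to_hash; envsolve.
Qed.

(* The [#]-pattern is replaced by a term typed under [mi_env F]: its linear entries
   (the inductive entries of [F]) become [#]-entries. *)
Lemma hash_weakening_mi G E F : (forall j, weak (E j)) -> mi_ok F -> app_split G E F ->
  env_hash_weakening (mi_env F) (ind_to_hash F G).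
Proof.
  intros HE HF HS j. specialize (HE j); specialize (HF j); specialize (HS j).
  unfold env_hash_weakening, ind_to_hash. envsolve.
Qed.

Lemma var_env_ind_to_hash E G F i : var_env E i -> app_split G E F -> mi_ok F ->
  var_env (ind_to_hash F G) i.
Proof.
  intros [H1 H2] HS HF. split.
  - specialize (HS i). specialize (HF i). unfold ind_to_hash. envsolve.
  - intros j Hj. specialize (H2 j Hj). specialize (HS j). specialize (HF j).
    unfold ind_to_hash. envsolve.
Qed.

Lemma dag_sub_mc_env G E F : app_split G E F -> dag_sub (mc_env F) (mc_env G).
Proof. intros HS j. specialize (HS j). unfold dag_sub. envsolve. Qed.

Ltac subst_side := first
  [ simpl; assumption
  | apply mi_ok_cons; assumption | apply mc_ok_cons; assumption
  | apply typ_lift0_mi; assumption | apply typ_lift0_mc; assumption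
  | apply typ_lift0; [assumption | apply shared_entry_weak]
  | rewrite <- ext_remove; apply app_split_ext; assumption ].

Ltac subst_binder IH k N F G kd :=
  apply (IH (S k) (lift 0 N) (env_cons (shared_entry kd) F) (ext kd G)); subst_side.

(* Application: the substituted variable is linear, so it lives in exactly one side. *)
Ltac subst_app_linear IH1 IH2 HE :=
  match goal with
  | H : app_split ?E ?E1 ?E2, HS : app_split ?G (env_remove ?k ?E) ?F |- _ =>
    pose proof (H k) as Hk; rewrite HE in Hk; pose proof (app_split_remove k _ _ _ H) as HR;
    destruct Hk as [[H1k H2k] | [H1k H2k]];
    [ destruct (app_split_assoc _ _ _ _ _ HR HS) as [HS1 HS2];
      apply (t_app _ _ _ _ _ _ HS1);
      [ eapply IH1; eauto | apply typ_unfold, typ_substk_unused, H2k; apply typ_fold; auto ]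
    | destruct (app_split_assoc _ _ _ _ _ (app_split_sym _ _ _ HR) HS) as [HS1 HS2];
      apply (t_app _ _ _ _ _ _ (app_split_sym _ _ _ HS1));
      [ apply typ_unfold, typ_substk_unused, H1k; apply typ_fold; auto | eapply IH2; eauto ] ]
  end.

Lemma typI_substk_lin E A k N F G : typI typ E A -> E k = Some KLin -> typ F N ->
  app_split G (env_remove k E) F -> typI typ G (substk k N A).
Proof.
  intros H; revert k N F G; induction H; intros k Ns F G' HE HN HS; unfold_ops.
  - rewrite substk_Var. destruct (Nat.eqb_spec i k).
    + subst i. rewrite (app_split_weak_l _ _ _ (var_env_remove_self _ _ H) HS).
      apply typ_unfold; auto.
    + exfalso. destruct H as [_ H]. specialize (H k). rewrite HE in H. apply H; auto.
  - subst_app_linear IHtypI1 IHtypI2 HE.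
  - constructor. subst_binder IHtypI k Ns F G' KLin.
  - apply t_li1. subst_binder IHtypI k Ns F G' KHash.
  - apply t_li2. subst_binder IHtypI k Ns F G' KInd.
  - constructor. subst_binder IHtypI k Ns F G' KCoi.
  - exfalso. apply (H k). auto.
  - exfalso. specialize (H k). rewrite HE in H. auto.
Qed.

Lemma typI_substk_ind E A k N F G : typI typ E A -> E k = Some KInd -> mi_ok F ->
  typ (mi_env F) N -> app_split G (env_remove k E) F -> typI typ G (substk k N A).
Proof.
  intros H; revert k N F G; induction H; intros k Ns F G' HE HF HN HS; unfold_ops.
  - exfalso. destruct H as [H1 H2]. destruct (Nat.eqb_spec i k).
    + subst; intuition congruence.
    + specialize (H2 k). rewrite HE in H2. apply H2; auto.
  - subst_app_linear IHtypI1 IHtypI2 HE.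
  - constructor. subst_binder IHtypI k Ns F G' KLin.
  - apply t_li1. subst_binder IHtypI k Ns F G' KHash.
  - apply t_li2. subst_binder IHtypI k Ns F G' KInd.
  - constructor. subst_binder IHtypI k Ns F G' KCoi.
  - destruct (app_split_mi _ _ _ (mi_ok_remove k _ H) HF HS) as [HG HSm].
    constructor; [exact HG|].
    apply (typI_substk_lin (mi_env G) M k Ns (mi_env F) (mi_env G')); auto.
    + unfold mi_env; rewrite HE; reflexivity.
    + rewrite <- mi_env_remove. exact HSm.
  - exfalso. specialize (H k). rewrite HE in H. auto.
Qed.

Lemma typI_substk_hash E A k N F G : typI typ E A -> E k = Some KHash -> mi_ok F ->
  typ (mi_env F) N -> app_split G (env_remove k E) F -> typI typ (ind_to_hash F G) (substk k N A).
Proof.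
  intros H; revert k N F G; induction H; intros k Ns F G' HE HF HN HS; unfold_ops.
  - rewrite substk_Var. destruct (Nat.eqb_spec i k).
    + subst i. apply (typI_hash_weaken (mi_env F)); [apply typ_unfold; auto|].
      exact (hash_weakening_mi _ _ _ (var_env_remove_self _ _ H) HF HS).
    + assert (W : weak (G k)) by (rewrite HE; exact I).
      pose proof (var_env_ind_to_hash _ _ _ _ (var_env_remove _ _ _ H n W) HS HF) as HV.
      destruct (Nat.ltb k i); constructor; exact HV.
  - pose proof (H k) as Hk. rewrite HE in Hk. destruct Hk as [H1k H2k].
    destruct (app_split_share _ _ _ _ _ HF (app_split_remove k _ _ _ H) HS) as (HS0 & HS1 & HS2).
    apply (t_app _ _ _ _ _ _ HS0); [eapply IHtypI1 | eapply IHtypI2]; eauto.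
  - constructor. rewrite <- (ind_to_hash_ext _ _ KLin). subst_binder IHtypI k Ns F G' KLin.
  - apply t_li1. rewrite <- (ind_to_hash_ext _ _ KHash). subst_binder IHtypI k Ns F G' KHash.
  - apply t_li2. rewrite <- (ind_to_hash_ext _ _ KInd). subst_binder IHtypI k Ns F G' KInd.
  - constructor. rewrite <- (ind_to_hash_ext _ _ KCoi). subst_binder IHtypI k Ns F G' KCoi.
  - destruct (ind_to_hash_mi _ _ _ (mi_ok_remove k _ H) HF HS) as [HG HG'].
    constructor; [exact HG|]. rewrite HG', mi_env_remove.
    apply typ_unfold, typ_substk_unused; [apply typ_fold; auto|].
    unfold mi_env; rewrite HE; reflexivity.
  - destruct (ind_to_hash_mc _ _ _ (mc_ok_remove k _ H) HF HS) as [HG HG'].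
    constructor; [exact HG|]. rewrite HG', mc_env_remove.
    apply typ_substk_unused; [auto|]. unfold mc_env; rewrite HE; reflexivity.
Qed.

Lemma mi_ok_of_mc_ok F : mc_ok F -> mi_ok F.
Proof. intros H j. specialize (H j). envsolve. Qed.

Lemma mc_ok_mi_env F : mc_ok F -> mc_ok (mi_env F).
Proof. intros H j. specialize (H j). unfold mc_ok. envsolve. Qed.

Lemma mc_env_mi_env F : mc_env (mi_env F) = mc_env F.
Proof. extensionality j. envsolve. Qed.

Lemma app_split_shared_part E E1 E2 F :
  app_split E E1 E2 -> app_split E E F -> mc_ok F -> app_split E1 E1 F.
Proof. intros H1 H2 HF j. specialize (H1 j); specialize (H2 j); specialize (HF j). envsolve. Qed.

(* The environment [F] of a coinductive box holds shared entries only, so [G] is just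
   [env_remove k E]. *)
Lemma typI_substk_coi E A k N F G : typI typ E A -> E k = Some KCoi -> mc_ok F ->
  typ (mc_env F) N -> app_split G (env_remove k E) F -> typI typ G (substk k N A).
Proof.
  intros H; revert k N F G; induction H; intros k Ns F G' HE HF HN HS; unfold_ops;
    rewrite (app_split_weak_l _ _ _ HF (app_split_sym _ _ _ HS)) in HS |- *.
  - rewrite substk_Var. destruct (Nat.eqb_spec i k).
    + exfalso. subst i. destruct H as [H _]. intuition congruence.
    + assert (W : weak (G k)) by (rewrite HE; exact I).
      pose proof (var_env_remove _ _ _ H n W) as HV.
      destruct (Nat.ltb k i); constructor; exact HV.
  - pose proof (app_split_remove k _ _ _ H) as HR.
    apply (t_app _ _ _ _ _ _ HR); [eapply IHtypI1 | eapply IHtypI2];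
      eauto using app_split_shared_part, app_split_sym.
    + pose proof (H k) as Hk. rewrite HE in Hk. tauto.
    + pose proof (H k) as Hk. rewrite HE in Hk. tauto.
  - constructor. subst_binder IHtypI k Ns F (env_remove k G) KLin.
  - apply t_li1. subst_binder IHtypI k Ns F (env_remove k G) KHash.
  - apply t_li2. subst_binder IHtypI k Ns F (env_remove k G) KInd.
  - constructor. subst_binder IHtypI k Ns F (env_remove k G) KCoi.
  - constructor; [apply mi_ok_remove; auto|]. rewrite mi_env_remove.
    apply (IHtypI k Ns (mi_env F)).
    + unfold mi_env; rewrite HE; reflexivity.
    + apply mc_ok_mi_env; auto.
    + rewrite mc_env_mi_env; auto.
    + rewrite <- mi_env_remove.
      apply (app_split_mi _ _ _ (mi_ok_remove k _ H) (mi_ok_of_mc_ok _ HF) HS).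
  - constructor; [apply mc_ok_remove; auto|]. rewrite mc_env_remove.
    apply (typ_substk_dag (mc_env F)); [auto | right; split; [|split]; auto].
    + unfold mc_env; rewrite HE; reflexivity.
    + rewrite <- mc_env_remove. exact (dag_sub_mc_env _ _ _ HS).
Qed.

(** * Subject reduction *)

(* Contracting [(λ↓x.M)(↓N)] with [x] a [#]-pattern turns the inductive entries of the
   environment of [N] into [#]-entries. *)
Definition env_promote (G G' : env) :=
  forall i, G' i = G i \/ (G i = Some KInd /\ G' i = Some KHash).

Lemma env_promote_refl G : env_promote G G.
Proof. intro; auto. Qed.

Lemma env_promote_noind G G' : (forall i, G i <> Some KInd) -> env_promote G G' -> G' = G.
Proof.
  intros H1 H2. extensionality i. destruct (H2 i) as [E|[E _]]; auto. exfalso; eapply H1; eauto.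
Qed.

Lemma mi_env_noind G i : mi_env G i <> Some KInd.
Proof. unfold mi_env; destruct (G i) as [[]|]; discriminate. Qed.

Lemma mc_env_noind G i : mc_env G i <> Some KInd.
Proof. unfold mc_env; destruct (G i) as [[]|]; discriminate. Qed.

Lemma env_promote_ind_to_hash G G1 G2 : app_split G G1 G2 -> env_promote G (ind_to_hash G2 G).
Proof. intros HS i. specialize (HS i). unfold ind_to_hash. envsolve. Qed.

Lemma env_promote_split G G1 G2 G1' : app_split G G1 G2 -> env_promote G1 G1' ->
  exists G' G2', env_promote G G' /\ app_split G' G1' G2' /\ env_weakening G2 G2'.
Proof.
  intros HS HU.
  pose (promoted X := fun i => match G1 i, G1' i with
                               | Some KInd, Some KHash => Some KHash | _, _ => X i end).
  exists (promoted G), (promoted G2).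
  split; [|split]; intro i; specialize (HS i); specialize (HU i); subst promoted;
    unfold env_weakening; envsolve.
Qed.

Lemma env_promote_ext kd G G'' : env_promote (ext kd G) G'' ->
  exists kd' G', G'' = ext kd' G' /\ env_promote G G' /\ (kd' = kd \/ kd' = KHash /\ kd = KInd).
Proof.
  intros HU. destruct (HU 0) as [E|[E1 E2]]; simpl in *;
    [exists kd | exists KHash]; exists (fun i => G'' (S i));
    (split; [extensionality i; destruct i; auto | split; [intro i; apply (HU (S i)) | auto]]).
  injection E1; auto.
Qed.

Lemma typI_App_inv (R : env -> term -> Prop) G M N : typI R G (App M N) ->
  exists G1 G2, app_split G G1 G2 /\ typI R G1 M /\ typI R G2 N.
Proof. intro H; inversion H; subst; eauto. Qed.
Lemma typI_Lam_inv (R : env -> term -> Prop) G M : typI R G (Lam M) -> typI R (ext KLin G) M.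
Proof. intro H; inversion H; subst; eauto. Qed.
Lemma typI_LamI_inv (R : env -> term -> Prop) G M : typI R G (LamI M) ->
  typI R (ext KHash G) M \/ typI R (ext KInd G) M.
Proof. intro H; inversion H; subst; eauto. Qed.
Lemma typI_LamC_inv (R : env -> term -> Prop) G M : typI R G (LamC M) -> typI R (ext KCoi G) M.
Proof. intro H; inversion H; subst; eauto. Qed.
Lemma typI_BoxI_inv (R : env -> term -> Prop) G M : typI R G (BoxI M) ->
  mi_ok G /\ typI R (mi_env G) M.
Proof. intro H; inversion H; subst; eauto. Qed.
Lemma typI_BoxC_inv (R : env -> term -> Prop) G M : typI R G (BoxC M) ->
  mc_ok G /\ R (mc_env G) M.
Proof. intro H; inversion H; subst; eauto. Qed.

Lemma typI_redex G M N : redex M N -> typI typ G M ->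
  exists G', env_promote G G' /\ typI typ G' N.
Proof.
  intros HR HT. destruct HR; apply typI_App_inv in HT; destruct HT as (G1 & G2 & HS & HA & HB);
    unfold subst0.
  - apply typI_Lam_inv in HA. exists G; split; [apply env_promote_refl|].
    apply (typI_substk_lin _ _ 0 N G2 G HA); [reflexivity | apply typ_fold | ]; auto.
  - apply typI_BoxI_inv in HB. destruct HB as [HF HB]. apply typI_LamI_inv in HA.
    destruct HA as [HA|HA].
    + exists (ind_to_hash G2 G). split; [eapply env_promote_ind_to_hash; eauto|].
      apply (typI_substk_hash _ _ 0 N G2 G HA); [reflexivity | | apply typ_fold | ]; auto.
    + exists G; split; [apply env_promote_refl|].
      apply (typI_substk_ind _ _ 0 N G2 G HA); [reflexivity | | apply typ_fold | ]; auto.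
  - apply typI_BoxC_inv in HB. destruct HB as [HF HB]. apply typI_LamC_inv in HA.
    exists G; split; [apply env_promote_refl|].
    apply (typI_substk_coi _ _ 0 N G2 G HA); [reflexivity | | | ]; auto.
Qed.

Lemma typI_ctx_step d M N G : ctx_step d M N -> typI typ G M ->
  exists G', env_promote G G' /\ typI typ G' N.
Proof.
  intros H; revert G; induction H; intros G HT.
  - eapply typI_redex; eauto.
  - apply typI_App_inv in HT. destruct HT as (G1 & G2 & HS & HM & HN).
    destruct (IHctx_step _ HM) as (G1' & HU & HT').
    destruct (env_promote_split _ _ _ _ HS HU) as (G' & G2' & HU' & HS' & HW).
    exists G'; split; auto. apply (t_app _ _ _ _ _ _ HS'); auto.
    apply typ_unfold. eapply typ_weaken; [apply typ_fold|]; eauto.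
  - apply typI_App_inv in HT. destruct HT as (G1 & G2 & HS & HM & HN).
    destruct (IHctx_step _ HN) as (G2' & HU & HT').
    destruct (env_promote_split _ _ _ _ (app_split_sym _ _ _ HS) HU) as (G' & G1' & HU' & HS' & HW).
    exists G'; split; auto. apply (t_app _ _ _ _ _ _ (app_split_sym _ _ _ HS')); auto.
    apply typ_unfold. eapply typ_weaken; [apply typ_fold|]; eauto.
  - apply typI_Lam_inv, IHctx_step in HT. destruct HT as (G'' & HU & HT).
    destruct (env_promote_ext _ _ _ HU) as (kd & G' & -> & HU' & [->|[_ E]]); [|discriminate].
    exists G'; split; [|constructor]; auto.
  - apply typI_LamI_inv in HT. destruct HT as [HT|HT]; apply IHctx_step in HT;
      destruct HT as (G'' & HU & HT);
      destruct (env_promote_ext _ _ _ HU) as (kd & G' & -> & HU' & [->|[-> _]]);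
      exists G'; split; auto; solve [apply t_li1; auto | apply t_li2; auto].
  - apply typI_LamC_inv, IHctx_step in HT. destruct HT as (G'' & HU & HT).
    destruct (env_promote_ext _ _ _ HU) as (kd & G' & -> & HU' & [->|[_ E]]); [|discriminate].
    exists G'; split; [|constructor]; auto.
  - apply typI_BoxI_inv in HT. destruct HT as [HF HT].
    destruct (IHctx_step _ HT) as (G'' & HU & HT').
    rewrite (env_promote_noind _ _ (mi_env_noind G) HU) in HT'.
    exists G; split; [apply env_promote_refl | constructor; auto].
  - apply typI_BoxC_inv in HT. destruct HT as [HF HT].
    destruct (IHctx_step _ (typ_unfold _ _ HT)) as (G'' & HU & HT').
    rewrite (env_promote_noind _ _ (mc_env_noind G) HU) in HT'.
    exists G; split; [apply env_promote_refl | constructor; auto using typ_fold].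
Qed.

Lemma typ_step_noind G M N : typ G M -> (forall i, G i <> Some KInd) -> step M N -> typ G N.
Proof.
  intros HT HN (M' & N' & H1 & H2 & H3).
  destruct (typI_ctx_step _ _ _ G H2) as (G' & HU & HT');
    [apply typ_unfold; eapply typ_bisim; eauto|].
  rewrite (env_promote_noind _ _ HN HU) in HT'. eapply typ_bisim; [apply typ_fold; eauto | auto].
Qed.

Lemma typ_star_noind G M N : typ G M -> (forall i, G i <> Some KInd) -> star M N -> typ G N.
Proof.
  intros HT HN HS. induction HS.
  - eapply typ_bisim; eauto.
  - apply IHHS. eapply typ_step_noind; eauto.
Qed.

(* Inside a coinductive box the environment has no inductive entries, so [=>] preserves it. *)
Definition typ_infred_image (G : env) (X : term) : Prop :=
  exists Y, typ G Y /\ (forall i, G i <> Some KInd) /\ infred Y X.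

Lemma typI_leads_image D X G : leads D X -> typI typ G D ->
  typI (fun G M => typ_infred_image G M \/ typ G M) G X.
Proof.
  intros H; revert G; induction H; intros G HT; inversion HT; subst.
  - constructor; auto.
  - eapply t_app; eauto.
  - constructor; auto.
  - apply t_li1; auto.
  - apply t_li2; auto.
  - constructor; auto.
  - constructor; auto.
  - constructor; auto. left. exists M; split; auto. split; auto. apply mc_env_noind.
Qed.

Lemma typ_leads G M L : typI typ G M -> leads M L -> typ G L.
Proof.
  intros HT HL.
  assert (C : forall G M, typ_infred_image G M -> typ G M).
  { apply typ_coind. intros G' X (Y & H1 & H2 & H3).
    destruct (infred_unfold _ _ H3) as (D & H4 & H5).
    apply (typI_leads_image D); auto. apply typ_unfold. eapply typ_star_noind; eauto. }
  apply typ_fold. eapply typI_mono; [|exact (typI_leads_image _ _ _ HL HT)].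
  intros G' X [H1|H1]; auto.
Qed.

(** * Commutation *)

Lemma typI_coi_not_shallow G A k : typI typ G A -> G k = Some KCoi -> ~ occurs_shallow k A.
Proof.
  intros H; revert k; induction H; intros k Hk Ho; inversion Ho; subst.
  - destruct H as [H _]. intuition congruence.
  - specialize (H k). rewrite Hk in H. destruct H. apply (IHtypI1 k); auto.
  - specialize (H k). rewrite Hk in H. destruct H. apply (IHtypI2 k); auto.
  - apply (IHtypI (S k)); auto.
  - apply (IHtypI (S k)); auto.
  - apply (IHtypI (S k)); auto.
  - apply (IHtypI (S k)); auto.
  - apply (IHtypI k); auto. unfold mi_env. rewrite Hk. reflexivity.
Qed.

Lemma leads_redex_commute G M N L : redex M N -> typI typ G M -> leads M L ->
  exists P, leads N P /\ redex L P.
Proof.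
  intros HR HT HL. destruct HR; apply typI_App_inv in HT;
    destruct HT as (G1 & G2 & HS & HA & HB); inversion HL; subst.
  - match goal with Hl : leadsI _ (Lam _) _ |- _ => inversion Hl; subst end.
    eexists; split; [|constructor].
    apply leads_substk; auto using infred_of_leads.
  - match goal with Hl : leadsI _ (LamI _) _ |- _ => inversion Hl; subst end.
    match goal with Hl : leadsI _ (BoxI _) _ |- _ => inversion Hl; subst end.
    eexists; split; [|constructor].
    apply leads_substk; auto using infred_of_leads.
  - match goal with Hl : leadsI _ (LamC _) _ |- _ => inversion Hl; subst end.
    match goal with Hl : leadsI _ (BoxC _) _ |- _ => inversion Hl; subst end.
    eexists; split; [|constructor].
    apply leads_substk; auto. intro Ho. exfalso.
    apply typI_LamC_inv in HA. eapply (typI_coi_not_shallow _ _ 0 HA); eauto.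
Qed.

Lemma leads_ctx_step0_commute G M N L : ctx_step false M N -> typI typ G M -> leads M L ->
  exists P, leads N P /\ ctx_step false L P.
Proof.
  intros H. revert G L.
  induction H; intros G0 L HT HL.
  - destruct (leads_redex_commute _ _ _ _ H HT HL) as (P & HNP & HLP).
    exists P; split; [|constructor]; auto.
  - apply typI_App_inv in HT; destruct HT as (G1 & G2 & HS & HA & HB). inversion HL; subst.
    destruct (IHctx_step _ _ HA ltac:(eassumption)) as (P1 & Q1 & Q2).
    exists (App P1 P). split; [constructor | apply c_appl]; auto.
  - apply typI_App_inv in HT; destruct HT as (G1 & G2 & HS & HA & HB). inversion HL; subst.
    destruct (IHctx_step _ _ HB ltac:(eassumption)) as (P1 & Q1 & Q2).
    exists (App N0 P1). split; [constructor | apply c_appr]; auto.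
  - apply typI_Lam_inv in HT. inversion HL; subst.
    destruct (IHctx_step _ _ HT ltac:(eassumption)) as (P1 & Q1 & Q2).
    exists (Lam P1). split; [constructor | apply c_lam]; auto.
  - apply typI_LamI_inv in HT. inversion HL; subst.
    destruct HT as [HT|HT]; destruct (IHctx_step _ _ HT ltac:(eassumption)) as (P1 & Q1 & Q2);
      exists (LamI P1); split; [constructor | apply c_lamI | constructor | apply c_lamI]; auto.
  - apply typI_LamC_inv in HT. inversion HL; subst.
    destruct (IHctx_step _ _ HT ltac:(eassumption)) as (P1 & Q1 & Q2).
    exists (LamC P1). split; [constructor | apply c_lamC]; auto.
  - apply typI_BoxI_inv in HT. destruct HT as [_ HT]. inversion HL; subst.
    destruct (IHctx_step _ _ HT ltac:(eassumption)) as (P1 & Q1 & Q2).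
    exists (BoxI P1). split; [constructor | apply c_boxI]; auto.
  - discriminate.
Qed.

Lemma env_finite_promote G G' : env_finite G -> env_promote G G' -> env_finite G'.
Proof.
  intros [n Hn] HU. exists n. intros i Hi.
  destruct (HU i) as [E|[E _]]; rewrite Hn in E; auto. discriminate.
Qed.

Theorem mainTheorem18 (M N L : term) :
  is_term M -> step0 M N -> leads M L ->
  exists P, is_term P /\ leads N P /\ step0 L P.
Proof.
  intros (G & HF & HT) (M' & N' & H1 & H2 & H3) HL.
  assert (HT' : typI typ G M') by (apply typ_unfold; eapply typ_bisim; eauto).
  pose proof (leads_bisim_l _ _ _ H1 HL) as HL'.
  destruct (leads_ctx_step0_commute _ _ _ _ H2 HT' HL') as (P & HNP & HLP).
  exists P; split; [|split].
  - destruct (typI_ctx_step _ _ _ G HLP (typ_unfold _ _ (typ_leads _ _ _ HT' HL')))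
      as (G' & HU & HP).
    exists G'. split; [eapply env_finite_promote | apply typ_fold]; eauto.
  - eapply leads_bisim_l; eauto.
  - exists L, P. repeat split; auto using bisim_refl.
Qed.
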